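(* Let $(L,\le,(\sqsubseteq_\alpha)_{\alpha<\kappa})$ be a model of Axioms 1–4, where $\kappa>0$ is an arbitrary ordinal. Let $f:L\to L$ be $\alpha$-monotonic for every ordinal $\alpha<\kappa$. Then $f$ has a least pre-fixed point with respect to $\sqsubseteq$, that is, an element $x$ with $f(x)\sqsubseteq x$ such that $x\sqsubseteq z$ whenever $f(z)\sqsubseteq z$. This element is also the least fixed point of $f$ with respect to $\sqsubseteq$.
   Context: Setting (model of Axioms 1–4). Let $(L,\le)$ be a complete lattice with join operation $\bigvee$ and least element $\perp$. Let $\kappa>0$ be an ordinal, and for each ordinal $\alpha<\kappa$ let $\sqsubseteq_\alpha$ be a preorder on $L$. Derived relations: - $x=_\alpha y$ means $x\sqsubseteq_\alpha y$ and $y\sqsubseteq_\alpha x$. - $x\sqsubset_\alpha y$ means $x\sqsubseteq_\alpha y$ and not $x=_\alpha y$. - $\sqsubset=\bigcup_{\alpha<\kappa}\sqsubset_\alpha$. - $x\sqsubseteq y$ means $x\sqsubset y$ or $x=y$. Derived set, for $x\in L$ and $\alpha<\kappa$: $(x]_\alpha=\{y\in L:\forall\beta<\alpha,\ x=_\beta y\}$. For a set $X$, $X\sqsubseteq_\alpha y$ means $x\sqsubseteq_\alpha y$ for all $x\in X$. The structure is a model of Axioms 1–4 if: - (A1) for all $\alpha<\beta<\kappa$, $x\sqsubseteq_\beta y$ implies $x=_\alpha y$; - (A2) $\bigcap_{\alpha<\kappa}=_\alpha$ is the identity relation on $L$; - (A3) for every $x\in L$, every $\alpha<\kappa$ and every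 $X\subseteq(x]_\alpha$ there is $y\in(x]_\alpha$ with $X\sqsubseteq_\alpha y$ such that for all $z\in(x]_\alpha$ with $X\sqsubseteq_\alpha z$ we have $y\sqsubseteq_\alpha z$ and $y\le z$; - (A4) for every nonempty $X\subseteq L$, every $\alpha<\kappa$ and every $y\in L$, if $y=_\alpha x$ for all $x\in X$ then $y=_\alpha\bigvee X$. A function $f:L\to L$ is $\alpha$-monotonic if $x\sqsubseteq_\alpha y$ implies $f(x)\sqsubseteq_\alpha f(y)$. *)

(* Ordinals below kappa are modelled by an arbitrary
   nonempty well-ordered type (I, lt); complete lattices by a partial order
   with a supremum operator on arbitrary subsets (predicates). *)
From Stdlib Require Import Relations Wellfounded.

Set Implicit Arguments.

Definition complete_lattice (L : Type) (le : L -> L -> Prop)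
  (sup : (L -> Prop) -> L) : Prop :=
  (forall x, le x x) /\
  (forall x y z, le x y -> le y z -> le x z) /\
  (forall x y, le x y -> le y x -> x = y) /\
  (forall (X : L -> Prop) x, X x -> le x (sup X)) /\
  (forall (X : L -> Prop) u, (forall x, X x -> le x u) -> le (sup X) u).

Definition nonempty_wellorder (I : Type) (lt : I -> I -> Prop) : Prop :=
  inhabited I /\
  (forall a, ~ lt a a) /\
  (forall a b c, lt a b -> lt b c -> lt a c) /\
  (forall a b, lt a b \/ a = b \/ lt b a) /\
  well_founded lt.

Section Derived.
Variables (L I : Type) (lt : I -> I -> Prop) (sq : I -> L -> L -> Prop).

Definition eqa (a : I) (x y : L) : Prop := sq a x y /\ sq a y x.
Definition lta (a : I) (x y : L) : Prop := sq a x y /\ ~ eqa a x y.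
Definition sqlt (x y : L) : Prop := exists a, lta a x y.
Definition sqle (x y : L) : Prop := sqlt x y \/ x = y.
Definition downset (x : L) (a : I) : L -> Prop :=
  fun y => forall b, lt b a -> eqa b x y.
Definition set_sqa (a : I) (X : L -> Prop) (y : L) : Prop :=
  forall x, X x -> sq a x y.

End Derived.

Definition model_A1_4 (L : Type) (le : L -> L -> Prop)
  (sup : (L -> Prop) -> L) (I : Type) (lt : I -> I -> Prop)
  (sq : I -> L -> L -> Prop) : Prop :=
  complete_lattice le sup /\
  nonempty_wellorder lt /\
  (forall a x, sq a x x) /\
  (forall a x y z, sq a x y -> sq a y z -> sq a x z) /\
  (forall a b x y, lt a b -> sq b x y -> eqa sq a x y) /\
  (forall x y, (forall a, eqa sq a x y) -> x = y) /\
  (forall x a (X : L -> Prop),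
     (forall z, X z -> downset lt sq x a z) ->
     exists y, downset lt sq x a y /\ set_sqa sq a X y /\
       (forall z, downset lt sq x a z -> set_sqa sq a X z ->
          sq a y z /\ le y z)) /\
  (forall (X : L -> Prop) a y, (exists x, X x) ->
     (forall x, X x -> eqa sq a y x) -> eqa sq a y (sup X)).

Definition mono_a (L I : Type) (sq : I -> L -> L -> Prop) (a : I)
  (f : L -> L) : Prop :=
  forall x y, sq a x y -> sq a (f x) (f y).

From Stdlib Require Import Wellfounded ClassicalEpsilon Classical
  FunctionalExtensionality.

(* By well-founded recursion
   we build a chain (x_a)_{a<kappa}: x_a is the least element, both for [=_a
   and for <=, among the a-pre-fixed points (f w [=_a w) of the slice of
   elements agreeing with x_b at every level b < a.  Such a least element
   exists because that slice is a set (y]_a for the join y of the earlier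
   stages (A4), and inside (y]_a the argument of Knaster-Tarski goes through
   with the least upper bounds provided by A3.  Each stage is also a fixed
   point at its own level: f x_a =_a x_a.  The join X of all stages agrees
   with x_b at every level b, hence f X = X by A2.  Finally, if f z [= z and
   z <> X, then at the first level a where X and z differ, z lies in the
   slice of stage a and is a-pre-fixed, so X =_a x_a [=_a z, i.e. X [_a z. *)

Section LeastFixpoint.

Variables (L : Type) (le : L -> L -> Prop) (sup : (L -> Prop) -> L)
  (I : Type) (lt : I -> I -> Prop) (sq : I -> L -> L -> Prop) (f : L -> L).

Hypothesis lattice : complete_lattice le sup.
Hypothesis lt_trans : forall a b c, lt a b -> lt b c -> lt a c.
Hypothesis lt_total : forall a b, lt a b \/ a = b \/ lt b a.
Hypothesis lt_wf : well_founded lt.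
Hypothesis sq_refl : forall a x, sq a x x.
Hypothesis sq_trans : forall a x y z, sq a x y -> sq a y z -> sq a x z.
Hypothesis axiom1 : forall a b x y, lt a b -> sq b x y -> eqa sq a x y.
Hypothesis axiom2 : forall x y, (forall a, eqa sq a x y) -> x = y.
Hypothesis axiom3 : forall x a (X : L -> Prop),
  (forall z, X z -> downset lt sq x a z) ->
  exists y, downset lt sq x a y /\ set_sqa sq a X y /\
    (forall z, downset lt sq x a z -> set_sqa sq a X z -> sq a y z /\ le y z).
Hypothesis axiom4 : forall (X : L -> Prop) a y, (exists x, X x) ->
  (forall x, X x -> eqa sq a y x) -> eqa sq a y (sup X).
Hypothesis f_mono : forall a, mono_a sq a f.

Lemma eqa_refl a x : eqa sq a x x.
Proof. split; apply sq_refl. Qed.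

Lemma eqa_sym a x y : eqa sq a x y -> eqa sq a y x.
Proof. intros [Hxy Hyx]; split; assumption. Qed.

Lemma eqa_trans a x y z : eqa sq a x y -> eqa sq a y z -> eqa sq a x z.
Proof. intros [Hxy Hyx] [Hyz Hzy]; split; eauto. Qed.

Lemma f_eqa a x y : eqa sq a x y -> eqa sq a (f x) (f y).
Proof. intros [Hxy Hyx]; split; apply f_mono; assumption. Qed.

Definition least_prefixed (S : L -> Prop) (a : I) (z : L) : Prop :=
  S z /\ sq a (f z) z /\
  (forall w, S w -> sq a (f w) w -> sq a z w /\ le z w).

(* Knaster-Tarski inside a slice (y]_a closed under f: the A3-join of all
   lower bounds of the a-pre-fixed points is itself a-pre-fixed. *)
Lemma slice_least_prefixed (S : L -> Prop) (y : L) (a : I) :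
  (forall w, S w <-> downset lt sq y a w) ->
  (forall w, S w -> S (f w)) ->
  exists z, least_prefixed S a z.
Proof.
  intros HS Sclosed.
  set (Lower := fun u => S u /\ forall w, S w -> sq a (f w) w -> sq a u w).
  destruct (axiom3 y a Lower) as [z [Dz [z_upper z_least]]].
  { intros u [Su _]; apply HS; exact Su. }
  assert (Sz : S z) by (apply HS; exact Dz).
  assert (z_below : forall w, S w -> sq a (f w) w -> sq a z w /\ le z w).
  { intros w Sw Hw. apply z_least; [apply HS; exact Sw |].
    intros u [_ Hu]; auto. }
  exists z; split; [exact Sz | split; [| exact z_below]].
  apply z_upper; split; [auto |].
  intros w Sw Hw. apply sq_trans with (f w); [| exact Hw].
  apply f_mono, (proj1 (z_below w Sw Hw)).
Qed.

Lemma least_prefixed_fixed (S : L -> Prop) (a : I) (z : L) :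
  (forall w, S w -> S (f w)) -> least_prefixed S a z -> eqa sq a (f z) z.
Proof.
  intros Sclosed [Sz [Hz z_least]]; split; [exact Hz |].
  apply z_least; [auto | apply f_mono; exact Hz].
Qed.

Lemma sup_of_coherent_family (R : I -> Prop) (x : I -> L) :
  (forall b c, R b -> R c -> lt c b -> le (x c) (x b)) ->
  (forall b c, R b -> R c -> lt b c -> eqa sq b (x b) (x c)) ->
  forall b, R b -> eqa sq b (x b) (sup (fun u => exists c, R c /\ u = x c)).
Proof.
  destruct lattice as [le_refl [le_trans [le_antisym [sup_upper sup_least]]]].
  intros decreasing coherent b Rb.
  set (Tail := fun u => exists c, R c /\ (b = c \/ lt b c) /\ u = x c).
  assert (HTail : eqa sq b (x b) (sup Tail)).
  { apply axiom4; [exists (x b); exists b; auto |].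
    intros u [c [Rc [[<- | Hbc] ->]]]; [apply eqa_refl | auto]. }
  assert (same_sup : sup Tail = sup (fun u => exists c, R c /\ u = x c)).
  { apply le_antisym; apply sup_least.
    - intros u [c [Rc [_ ->]]]. apply sup_upper; eauto.
    - intros u [c [Rc ->]].
      destruct (lt_total c b) as [Hcb | [<- | Hbc]].
      + apply le_trans with (x b); auto. apply sup_upper; exists b; auto.
      + apply sup_upper; exists c; auto.
      + apply sup_upper; exists c; auto. }
  rewrite <- same_sup; exact HTail.
Qed.

Definition agrees_below (x : I -> L) (a : I) (w : L) : Prop :=
  forall b, lt b a -> eqa sq b w (x b).

Definition stage (x : I -> L) (a : I) : Prop :=
  least_prefixed (agrees_below x a) a (x a).

Lemma agrees_below_closed (x : I -> L) (a : I) :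
  (forall b, lt b a -> eqa sq b (f (x b)) (x b)) ->
  forall w, agrees_below x a w -> agrees_below x a (f w).
Proof.
  intros fixed w Hw b Hb.
  apply eqa_trans with (f (x b)); [apply f_eqa |]; auto.
Qed.

Lemma stages_fixed (x : I -> L) (a : I) :
  (forall b, lt b a -> stage x b) ->
  forall b, lt b a -> eqa sq b (f (x b)) (x b).
Proof.
  intros stages b; induction b as [b IH] using (well_founded_ind lt_wf).
  intros Hb. apply least_prefixed_fixed with (agrees_below x b).
  - apply agrees_below_closed; intros c Hcb; apply IH; eauto.
  - exact (stages b Hb).
Qed.

Lemma stages_decreasing (x : I -> L) (b c : I) :
  stage x b -> stage x c -> lt c b -> le (x c) (x b).
Proof.
  intros [xb_agrees [xb_pre _]] [_ [_ xc_least]] Hcb.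
  apply xc_least.
  - intros d Hd; apply xb_agrees; eauto.
  - apply (axiom1 c b _ _ Hcb xb_pre).
Qed.

Lemma sup_of_stages (x : I -> L) (R : I -> Prop) :
  (forall c, R c -> stage x c) ->
  forall b, R b -> eqa sq b (x b) (sup (fun u => exists c, R c /\ u = x c)).
Proof.
  intros stages. apply sup_of_coherent_family.
  - intros b c Rb Rc; apply stages_decreasing; auto.
  - intros b c _ Rc Hbc. apply eqa_sym, (proj1 (stages c Rc)); exact Hbc.
Qed.

Lemma next_stage_exists (x : I -> L) (a : I) :
  (forall b, lt b a -> stage x b) ->
  exists z, least_prefixed (agrees_below x a) a z.
Proof.
  intros stages.
  set (y := sup (fun u => exists c, lt c a /\ u = x c)).
  assert (Hy : forall b, lt b a -> eqa sq b (x b) y)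
    by (apply sup_of_stages; exact stages).
  apply slice_least_prefixed with y.
  - intros w; split; intros Hw b Hb.
    + apply eqa_trans with (x b); apply eqa_sym; auto.
    + apply eqa_trans with y; apply eqa_sym; auto.
  - apply agrees_below_closed, stages_fixed; exact stages.
Qed.

Definition choose_stage (a : I) (h : forall b, lt b a -> L) : L :=
  epsilon (inhabits (sup (fun _ => False)))
    (least_prefixed (fun w => forall b (p : lt b a), eqa sq b w (h b p)) a).

Definition chain : I -> L := Fix lt_wf (fun _ => L) choose_stage.

Lemma chain_unfold (a : I) : chain a = choose_stage a (fun b _ => chain b).
Proof.
  apply (Fix_eq lt_wf (fun _ => L) choose_stage).
  intros c h1 h2 Heq.
  replace h2 with h1; [reflexivity |].
  apply functional_extensionality_dep; intro b.
  apply functional_extensionality_dep; intro p; apply Heq.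
Qed.

Lemma chain_stage : forall a, stage chain a.
Proof.
  intros a; induction a as [a IH] using (well_founded_ind lt_wf).
  unfold stage; rewrite (chain_unfold a).
  exact (epsilon_spec _ _ (next_stage_exists chain a IH)).
Qed.

Definition limit : L := sup (fun u => exists c, True /\ u = chain c).

Lemma limit_agrees (b : I) : eqa sq b limit (chain b).
Proof.
  apply eqa_sym, (sup_of_stages chain (fun _ => True)); [| trivial].
  intros c _; apply chain_stage.
Qed.

Lemma chain_fixed (a : I) : eqa sq a (f (chain a)) (chain a).
Proof.
  apply least_prefixed_fixed with (agrees_below chain a); [| apply chain_stage].
  apply agrees_below_closed, stages_fixed; intros b _; apply chain_stage.
Qed.

Lemma limit_fixed : f limit = limit.
Proof.
  apply axiom2; intro a.
  apply eqa_trans with (f (chain a)); [apply f_eqa, limit_agrees |].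
  apply eqa_trans with (chain a);
    [apply chain_fixed | apply eqa_sym, limit_agrees].
Qed.

Lemma first_level (P : I -> Prop) :
  (exists a, P a) -> exists a, P a /\ forall b, lt b a -> ~ P b.
Proof.
  intros [a Pa]. apply NNPP; intro no_first.
  induction a as [a IH] using (well_founded_ind lt_wf).
  apply no_first; exists a; split; [exact Pa |].
  intros b Hb Pb; exact (IH b Hb Pb).
Qed.

(* A [=-pre-fixed point in the slice of stage a is a-pre-fixed: it cannot
   be strictly pre-fixed at a lower level, where it agrees with a stage. *)
Lemma prefixed_at_level (a : I) (z : L) :
  agrees_below chain a z -> sqle sq (f z) z -> sq a (f z) z.
Proof.
  intros Hz [[d [Hd not_eq_d]] | fixed_z].
  - destruct (lt_total d a) as [Hda | [<- | Had]].
    + exfalso; apply not_eq_d.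
      apply eqa_trans with (f (chain d)); [apply f_eqa, Hz, Hda |].
      apply eqa_trans with (chain d); [apply chain_fixed |].
      apply eqa_sym, Hz, Hda.
    + exact Hd.
    + exact (proj1 (axiom1 a d _ _ Had Hd)).
  - rewrite fixed_z; apply sq_refl.
Qed.

(* The limit is below every [=-pre-fixed point: strictly so at the first
   level where they differ. *)
Lemma limit_least (z : L) : sqle sq (f z) z -> sqle sq limit z.
Proof.
  intros z_pre.
  destruct (classic (limit = z)) as [<- | differ]; [right; reflexivity | left].
  destruct (first_level (fun a => ~ eqa sq a limit z))
    as [a [not_eq_a below_eq]].
  { apply not_all_ex_not; intro all_eq; apply differ, axiom2, all_eq. }
  assert (z_slice : agrees_below chain a z).
  { intros b Hb. apply eqa_trans with limit; [| apply limit_agrees].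
    apply eqa_sym, NNPP, below_eq, Hb. }
  destruct (chain_stage a) as [_ [_ chain_least]].
  destruct (chain_least z z_slice (prefixed_at_level a z z_slice z_pre))
    as [chain_below_z _].
  exists a; split; [| exact not_eq_a].
  apply sq_trans with (chain a); [apply limit_agrees | exact chain_below_z].
Qed.

Theorem least_fixpoint :
  exists x,
    (sqle sq (f x) x /\ (forall z, sqle sq (f z) z -> sqle sq x z)) /\
    (f x = x /\ (forall z, f z = z -> sqle sq x z)).
Proof.
  exists limit; split; split.
  - right; exact limit_fixed.
  - exact limit_least.
  - exact limit_fixed.
  - intros z fixed_z; apply limit_least; right; exact fixed_z.
Qed.

End LeastFixpoint.

Theorem mainTheorem2 (L : Type) (le : L -> L -> Prop)
  (sup : (L -> Prop) -> L) (I : Type) (lt : I -> I -> Prop)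
  (sq : I -> L -> L -> Prop) (f : L -> L) :
  model_A1_4 le sup lt sq ->
  (forall a, mono_a sq a f) ->
  exists x,
    (sqle sq (f x) x /\ (forall z, sqle sq (f z) z -> sqle sq x z)) /\
    (f x = x /\ (forall z, f z = z -> sqle sq x z)).
Proof.
  intros [lattice [[_ [_ [lt_trans [lt_total lt_wf]]]]
          [sq_refl [sq_trans [axiom1 [axiom2 [axiom3 axiom4]]]]]]] f_mono.
  exact (least_fixpoint _ _ _ _ _ _ _ lattice lt_trans lt_total lt_wf
           sq_refl sq_trans axiom1 axiom2 axiom3 axiom4 f_mono).
Qed.
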